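(* Assume the setting and standing assumptions described in the context. Let $0<\tau_i\le\tau_{i+1}$ and let $\underline{M}_{\tau_i},\underline{M}_{\tau_{i+1}}\subset\mathbb{R}^n$ be inner-approximations of the isochronous manifolds $M_{\tau_i}$ and $M_{\tau_{i+1}}$ respectively. Assume that each of $\underline{M}_{\tau_i}$ and $\underline{M}_{\tau_{i+1}}$ has the ray property (for every $x\in\mathbb{R}^n\setminus\{0\}$ there exists a unique $\lambda_x>0$ with $\lambda_x x$ in the set), and that the pair has the encirclement property (for every $x\in\underline{M}_{\tau_i}$ there exists a unique $\lambda_x\in(0,1)$ with $\lambda_x x\in\underline{M}_{\tau_{i+1}}$, and there is no $\kappa_x\ge1$ with $\kappa_x x\in\underline{M}_{\tau_{i+1}}$). Define $$\mathcal{R}_i=\{x\in\mathbb{R}^n:\ \exists\kappa_x\ge1\text{ with }\kappa_x x\in\underline{M}_{\tau_i}\ \text{and}\ \exists\lambda_x\in(0,1)\text{ with }\lambda_x x\in\underline{M}_{\tau_{i+1}}\}.$$ Then $\tau_i\le\tau(x)$ for all $x\in\mathcal{R}_i$.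
   Context: Let $f:\mathbb{R}^n\times\mathbb{R}^m\to\mathbb{R}^n$ and a feedback law $\upsilon:\mathbb{R}^n\to\mathbb{R}^m$ be given. Define $F:\mathbb{R}^{2n}\to\mathbb{R}^{2n}$ by $F(z,e)=\big(f(z,\upsilon(z+e)),\,-f(z,\upsilon(z+e))\big)$. For $x\in\mathbb{R}^n$, $\xi(t;x)$ denotes the solution of $\dot\xi=F(\xi)$ with $\xi(0;x)=(x,0)$. A triggering function $\phi:\mathbb{R}^{2n}\to\mathbb{R}$ is given, and $\tau(x)=\inf\{t>0:\phi(\xi(t;x))=0\}$. The isochronous manifold of time $\tau_\star>0$ is $M_{\tau_\star}=\{x:\tau(x)=\tau_\star\}$. A set $\underline{M}_{\tau_\star}\subset\mathbb{R}^n$ is an inner-approximation of $M_{\tau_\star}$ if for every $x\in\underline{M}_{\tau_\star}$ there exists $\kappa_x\ge1$ with $\kappa_x x\in M_{\tau_\star}$ and there is no $\lambda_x\in(0,1)$ with $\lambda_x x\in M_{\tau_\star}$. Standing assumptions: (i) $F$ is smooth and homogeneous of degree $\alpha\ge1$ with all weights $1$, i.e. $F(\lambda\xi)=\lambda^{\alpha+1}F(\xi)$ for all $\lambda>0$; (ii) $\phi$ is smooth and homogeneous of degree $\theta\ge1$ with weights $1$, i.e. $\phi(\lambda\xi)=\lambda^{\theta+1}\phi(\xi)$ for all $\lambda>0$; (iii) for every $x\neq0$, $\phi((x,0))<0$ and there exists $t_x\in(0,\infty)$ with $\phi(\xi(t_x;x))=0$; (iv) compact sets $\mathrm{Z}\subset\mathbb{R}^n$,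 $\Xi\subset\mathbb{R}^{2n}$ containing a neighbourhood of the origin are given such that for all $x\in\mathrm{Z}$, $t\ge0$: $\phi(\xi(t;x))\le0\Rightarrow\xi(t;x)\in\Xi$; (v) the origin is the only equilibrium of $\dot\zeta=f(\zeta,\upsilon(\zeta))$. *)

(* Vectors of R^k are row vectors 'rV[R]_k;
   a point (z,e) of R^{2n} is row_mx z e : 'rV[R]_(n + n). *)
From HB Require Import structures.
From mathcomp Require Import all_boot all_order all_algebra.
From mathcomp Require Import all_classical all_reals all_analysis.
Set Implicit Arguments. Unset Strict Implicit. Unset Printing Implicit Defensive.
Import Order.TTheory GRing.Theory Num.Theory.
Import numFieldNormedType.Exports.
Local Open Scope classical_set_scope.
Local Open Scope ring_scope.

Section Defs.
Context {R : realType}.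

Fixpoint iter_dderive {V W : normedModType R} (vs : seq V) (f : V -> W) : V -> W :=
  match vs with
  | [::] => f
  | v :: vs' => fun x => 'D_v (iter_dderive vs' f) x
  end.

Definition smooth {V W : normedModType R} (f : V -> W) : Prop :=
  forall vs : seq V,
    continuous (iter_dderive vs f) /\
    (forall (v x : V), derivable (iter_dderive vs f) x v).

Definition Fcl {n m : nat} (f : 'rV[R]_n -> 'rV[R]_m -> 'rV[R]_n)
  (u : 'rV[R]_n -> 'rV[R]_m) (w : 'rV[R]_(n + n)) : 'rV[R]_(n + n) :=
  let z := lsubmx w in let e := rsubmx w in
  row_mx (f z (u (z + e))) (- f z (u (z + e))).

Definition is_solution_flow {n : nat} (F : 'rV[R]_(n + n) -> 'rV[R]_(n + n))
  (xi : 'rV[R]_n -> R -> 'rV[R]_(n + n)) : Prop :=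
  forall x : 'rV[R]_n,
    xi x 0 = row_mx x 0 /\
    {within `[0, +oo[, continuous (xi x)} /\
    (forall t : R, 0 < t -> is_derive t 1 (xi x) (F (xi x t))).

Definition tau {n : nat} (phi : 'rV[R]_(n + n) -> R)
  (xi : 'rV[R]_n -> R -> 'rV[R]_(n + n)) (x : 'rV[R]_n) : R :=
  inf [set t : R | 0 < t /\ phi (xi x t) = 0].

Definition isochron {n : nat} (phi : 'rV[R]_(n + n) -> R)
  (xi : 'rV[R]_n -> R -> 'rV[R]_(n + n)) (ts : R) : set 'rV[R]_n :=
  [set x | tau phi xi x = ts].

Definition inner_approx {n : nat} (A M : set 'rV[R]_n) : Prop :=
  forall x, A x ->
    (exists k : R, 1 <= k /\ M (k *: x)) /\
    ~ (exists l : R, 0 < l < 1 /\ M (l *: x)).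

Definition ray_property {n : nat} (A : set 'rV[R]_n) : Prop :=
  forall x : 'rV[R]_n, x != 0 -> exists! l : R, 0 < l /\ A (l *: x).

Definition encirclement {n : nat} (A B : set 'rV[R]_n) : Prop :=
  forall x, A x ->
    (exists! l : R, 0 < l < 1 /\ B (l *: x)) /\
    ~ (exists k : R, 1 <= k /\ B (k *: x)).

Definition region {n : nat} (A B : set 'rV[R]_n) : set 'rV[R]_n :=
  [set x | (exists k : R, 1 <= k /\ A (k *: x)) /\
           (exists l : R, 0 < l < 1 /\ B (l *: x))].

End Defs.

From HB Require Import structures.
From mathcomp Require Import all_boot all_order all_algebra.
From mathcomp Require Import all_classical all_reals all_analysis.
From mathcomp Require Import lra.
Import Order.TTheory GRing.Theory Num.Theory.
Import numFieldNormedType.Exports.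
Local Open Scope classical_set_scope.
Local Open Scope ring_scope.

(* Pick K >= 1 with K x on M_{tau_i}.  By homogeneity of F, the curve
   s |-> K xi(K^alpha s; x) solves the same ODE as xi(.; K x) from the same
   initial state, and F is smooth, hence Lipschitz on bounded sets, so the two
   curves coincide.  By homogeneity of phi, every zero t of phi(xi(.; x)) then
   gives the zero t / K^alpha of phi(xi(.; K x)), whence
   tau_i = tau(K x) <= tau(x) / K^alpha <= tau(x). *)

Section LineDerivative.
Context {R : numFieldType} {V W : normedModType R}.

Lemma is_derive_line (F : V -> W) (p e : V) (s : R) :
  derivable F (p + s *: e) e ->
  is_derive s 1 (fun r : R => F (p + r *: e)) ('D_e F (p + s *: e)).
Proof.
move=> dF.
have E : (fun h : R => h^-1 *: (((fun r : R => F (p + r *: e)) \o shift s) (h *: 1)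
     - (fun r : R => F (p + r *: e)) s))
   = (fun h : R => h^-1 *: ((F \o shift (p + s *: e)) (h *: e) - F (p + s *: e))).
  apply/funext => h /=; congr (_ *: (F _ - _)).
  by rewrite /shift /= [h%:A]mulr1 scalerDl addrCA addrC.
have dv : derivable (fun r : R => F (p + r *: e)) s 1 by rewrite /derivable E.
by apply: DeriveDef => //; rewrite /derive E.
Qed.

End LineDerivative.

Section TimeRescaling.
Context {R : realType} {W : normedModType R}.

Lemma is_derive_comp_scale (f : R -> W) (c s : R) (df : W) :
  is_derive (c * s) 1 f df -> is_derive s 1 (fun r => f (c * r)) (c *: df).
Proof.
move=> [fd fv].
have hm : is_derive s (1 : R) (fun r : R => c * r) c.
  by have := is_deriveZ c (is_derive_id s (1 : R)); rewrite /GRing.scale /= mulr1.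
have df1 : differentiable f (c * s) by apply/derivable1_diffP.
have dm : differentiable (fun r : R => c * r) s by apply/derivable1_diffP; case: hm.
have dc : differentiable (f \o (fun r : R => c * r)) s by exact: differentiable_comp.
apply: DeriveDef; first by apply/derivable1_diffP.
rewrite -derive1E derive1E' // diff_comp //.
have dmc : 'd ( *%R c) s 1 = c by rewrite -derive1E' // derive1E; case: hm.
by rewrite /= dmc (deriv1E (f := f)) // derive1E fv.
Qed.

Lemma cvg_mulr_at_right0 (c : R) : 0 < c ->
  (fun x => c * x) @ (0 : R)^'+ --> (0 : R)^'+.
Proof.
move=> c0 A [e /= e0 He]; exists (e / c); first by rewrite /= divr_gt0.
move=> y /= ye y0; apply: He; last exact: mulr_gt0.
move: ye; rewrite /ball_ /= !sub0r !normrN !gtr0_norm ?mulr_gt0 // => ye.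
by rewrite -ltr_pdivlMl // mulrC.
Qed.

Lemma continuous_within_nonneg_comp_scale (f : R -> W) (c : R) : 0 < c ->
  {within `[0, +oo[, continuous f} ->
  {within `[0, +oo[, continuous (fun s => f (c * s))}.
Proof.
move=> c0 /continuous_within_itvcyP [fin fr].
apply/continuous_within_itvcyP; split.
  move=> x; rewrite in_itv /= andbT => x0.
  apply: (@continuous_comp _ _ _ (fun s : R => c * s) f).
    exact: mulrl_continuous.
  by apply: fin; rewrite in_itv /= andbT mulr_gt0.
by rewrite mulr0; exact: (cvg_comp _ _ (cvg_mulr_at_right0 c c0) fr).
Qed.

End TimeRescaling.

Section RowVectorCalculus.
Context {R : realType} {N : nat}.
Local Notation V := 'rV[R]_N.

Lemma coord_le_mx_norm (v : V) i : `|v ord0 i| <= `|v|.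
Proof.
rewrite [X in _ <= X]/Num.Def.normr /= mx_normrE.
exact: (le_bigmax _ (fun ij : 'I_1 * 'I_N => `|v ij.1 ij.2|) (ord0, i)).
Qed.

Lemma mx_norm_le_coord (v : V) B :
  0 <= B -> (forall i, `|v ord0 i| <= B) -> `|v| <= B.
Proof.
move=> B0 vB; rewrite [X in X <= _]/Num.Def.normr /= mx_normrE.
by apply: bigmax_le => // -[i j] _ /=; rewrite (ord1 i); exact: vB.
Qed.

Lemma closed_ball0_compact (B : R) : compact [set v : V | `|v| <= B].
Proof.
apply: bounded_closed_compact.
  exists B; split; first by rewrite num_real.
  by move=> M BM v /= vB; apply: le_trans vB (ltW BM).
apply: (@preimage_closed _ _ (fun v : V => `|v|) [set r | r <= B]).
  by move=> v _; exact: norm_continuous.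
exact: closed_le.
Qed.

Lemma mean_value_le_rV (g dg : R -> V) a b M : a <= b ->
  {within `[a, b], continuous g} ->
  (forall r, r \in `]a, b[ -> is_derive r 1 g (dg r)) ->
  (forall r, r \in `]a, b[ -> `|dg r| <= M) ->
  `|g b - g a| <= M * (b - a).
Proof.
rewrite le_eqVlt => /predU1P[<- _ _ _|ab gc gd gM].
  by rewrite !subrr normr0 mulr0.
have M0 : 0 <= M.
  by apply: le_trans (gM ((a + b) / 2) _); [exact: normr_ge0 | exact: mid_in_itvoo].
apply: mx_norm_le_coord => [|i]; first by rewrite mulr_ge0 // subr_ge0 ltW.
pose h r := g r ord0 i.
have hd r : r \in `]a, b[ -> is_derive r 1 h (dg r ord0 i).
  move=> /gd [dv dval]; apply: DeriveDef; first by move/derivable_mxP: dv; apply.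
  by rewrite -dval derive_mx // mxE.
have hc : {within `[a, b], continuous h}.
  apply: (@within_continuous_comp _ _ _ _ g (fun v : V => v ord0 i)) => //.
  by move=> y _; exact: coord_continuous.
have [c cab hE] := MVT ab hd hc.
rewrite !mxE -/(h b) -/(h a) hE normrM [`|b - a|]ger0_norm; last by rewrite subr_ge0 ltW.
apply: ler_wpM2r; first by rewrite subr_ge0 ltW.
exact: le_trans (coord_le_mx_norm _ _) (gM c cab).
Qed.

Lemma mean_value_le_line (F : V -> V) (p e : V) (d C : R) :
  continuous F -> (forall x, derivable F x e) ->
  (forall r, (0 <= r <= d) \/ (d <= r <= 0) -> `|'D_e F (p + r *: e)| <= C) ->
  `|F (p + d *: e) - F p| <= C * `|d|.
Proof.
move=> Fc Fd DC.
pose g r := F (p + r *: e).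
have gc (A : set R) : {within A, continuous g}.
  apply: continuous_subspaceT => r.
  apply: (@continuous_comp _ _ _ (fun r : R => p + r *: e) F); last exact: Fc.
  by apply: continuousD; [exact: cst_continuous | exact: scalel_continuous].
have gd (r : R) : is_derive r 1 g ('D_e F (p + r *: e)) by exact: is_derive_line.
have [d0|d0] := leP 0 d.
  have := mean_value_le_rV g _ 0 d C d0 (gc _) (fun r _ => gd r).
  rewrite /g scale0r addr0 subr0 ger0_norm //; apply=> r.
  by rewrite in_itv /= => /andP[r0 rd]; apply: DC; left; rewrite !ltW.
have := mean_value_le_rV g _ d 0 C (ltW d0) (gc _) (fun r _ => gd r).
rewrite /g scale0r addr0 sub0r ltr0_norm // distrC; apply=> r.
by rewrite in_itv /= => /andP[dr r0]; apply: DC; right; rewrite !ltW.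
Qed.

Definition staircase (a b : V) (j : nat) : V :=
  \row_i (if (i < j)%N then b ord0 i else a ord0 i).

Lemma staircase0 (a b : V) : staircase a b 0 = a.
Proof. by apply/rowP => i; rewrite !mxE ltn0. Qed.

Lemma staircaseN (a b : V) : staircase a b N = b.
Proof. by apply/rowP => i; rewrite !mxE ltn_ord. Qed.

Lemma staircaseS (a b : V) (k : 'I_N) :
  staircase a b k.+1 = staircase a b k + (b ord0 k - a ord0 k) *: delta_mx 0 k.
Proof.
apply/rowP => i; rewrite !mxE eqxx ltnS leq_eqVlt val_eqE.
by case: eqP => [->|_] /=; rewrite ?ltnn ?mulr1 ?mulr0 ?addr0 // addrC subrK.
Qed.

Lemma staircase_step_norm_le (a b : V) (B r : R) (k : 'I_N) :
  `|a| <= B -> `|b| <= B ->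
  (0 <= r <= b ord0 k - a ord0 k) \/ (b ord0 k - a ord0 k <= r <= 0) ->
  `|staircase a b k + r *: delta_mx 0 k| <= B.
Proof.
move=> aB bB rk; have B0 : 0 <= B := le_trans (normr_ge0 a) aB.
apply: mx_norm_le_coord => // i; rewrite !mxE eqxx /=.
have [ai bi] := (le_trans (coord_le_mx_norm a i) aB, le_trans (coord_le_mx_norm b i) bB).
case: eqP => [ik|_]; rewrite ?mulr0 ?addr0; last by case: ifP.
move: ai bi; rewrite ik ltnn mulr1 !ler_norml => /andP[? ?] /andP[? ?].
by case: rk => /andP[? ?]; apply/andP; split; lra.
Qed.

Definition lipschitz_on_balls (F : V -> V) :=
  forall B : R, exists2 L : R, 0 <= L & L.-lipschitz_[set v | `|v| <= B] F.

(* The Lipschitz constant is the sum of bounds of the partial derivatives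
   over the ball; a staircase path between a and b changes one coordinate
   at a time and stays in the ball. *)
Lemma C1_lipschitz_on_balls (F : V -> V) :
  continuous F -> (forall v x, derivable F x v) ->
  (forall v, continuous ('D_v F)) -> lipschitz_on_balls F.
Proof.
move=> Fc Fd Dc B; have [B0|B0] := leP 0 B; last first.
  by exists 0 => // -[a b] [/= aB _]; have := normr_ge0 a; lra.
have /fin_all_exists[C DC] : forall k : 'I_N, exists C : R,
    forall y, `|y| <= B -> `|'D_(delta_mx 0 k) F y| <= C.
  move=> k.
  have [|||c _ maxc] := @EVT_max_rV R N (fun y => `|'D_(delta_mx 0 k) F y|)
    [set v | `|v| <= B].
  - by exists 0; rewrite /= normr0.
  - exact: closed_ball0_compact.
  - apply: continuous_subspaceT => y.
    exact: continuous_comp (Dc _ y) (@norm_continuous _ _ _).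
  by exists `|'D_(delta_mx 0 k) F c| => y yB; apply: maxc; rewrite inE.
exists (\sum_k `|C k|); first exact: sumr_ge0.
move=> [a b] [/= aB bB].
have -> : F a - F b =
    \sum_(k < N) (F (staircase b a k.+1) - F (staircase b a k)).
  rewrite -(big_mkord xpredT (fun k => F (staircase b a k.+1) - F (staircase b a k))).
  by rewrite telescope_sumr // staircase0 staircaseN.
rewrite mulr_suml.
apply: le_trans (ler_norm_sum _ _ _) _; apply: ler_sum => k _.
rewrite staircaseS.
apply: le_trans (mean_value_le_line F _ _ _ `|C k| Fc (Fd _) _) _.
- move=> r rk; apply: le_trans (DC _ _ _) (ler_norm _).
  exact: staircase_step_norm_le.
- by apply: ler_wpM2l => //; have := coord_le_mx_norm (a - b) k; rewrite !mxE.
Qed.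

End RowVectorCalculus.

Section AutonomousODE.
Context {R : realType} {N : nat}.
Local Notation V := 'rV[R]_N.

Definition forward_solution (F : V -> V) (y : R -> V) :=
  {within `[0, +oo[, continuous y} /\
  forall t : R, 0 < t -> is_derive t 1 y (F (y t)).

(* Gronwall-type step: on a window shorter than 1/L the maximal distance D
   between the solutions satisfies D <= L D (t - s) < D unless D = 0. *)
Lemma ode_solutions_agree_short (F : V -> V) (A : set V) (L s t : R)
    (y1 y2 : R -> V) :
  0 <= L -> L.-lipschitz_A F -> s <= t -> (t - s) * L < 1 ->
  {within `[s, t], continuous y1} -> {within `[s, t], continuous y2} ->
  (forall r, r \in `]s, t[ -> is_derive r 1 y1 (F (y1 r))) ->
  (forall r, r \in `]s, t[ -> is_derive r 1 y2 (F (y2 r))) ->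
  (forall r, r \in `[s, t] -> A (y1 r) /\ A (y2 r)) ->
  y1 s = y2 s -> y1 t = y2 t.
Proof.
move=> L0 FL st stL c1 c2 d1 d2 yA ys.
have cD : {within `[s, t], continuous (fun r => y1 r - y2 r)}.
  by move=> r; apply: cvgB; [exact: c1 | exact: c2].
have [c cst Dmax] := EVT_max st
  (fun r => continuous_comp (cD r) (@norm_continuous _ _ _)).
move: (cst); rewrite in_itv /= => /andP[sc ct].
set D := `|y1 c - y2 c| in Dmax.
have sub_ct r : r \in `]s, c[ -> (r \in `]s, t[) /\ (r \in `[s, t]).
  by rewrite !in_itv /= => /andP[sr rc]; rewrite sr !ltW // (lt_le_trans rc ct).
have HD : D <= L * D * (c - s).
  have := mean_value_le_rV (fun r => y1 r - y2 r)
    (fun r => F (y1 r) - F (y2 r)) s c (L * D) sc.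
  rewrite ys subrr subr0; apply.
  - apply: continuous_subspaceW cD => r /=; rewrite !in_itv /= => /andP[-> rc].
    exact: le_trans rc ct.
  - by move=> r /sub_ct[rst _]; exact: is_deriveB (d1 r rst) (d2 r rst).
  move=> r /sub_ct[_ rst]; have [A1 A2] := yA r rst.
  by apply: le_trans (FL (y1 r, y2 r) (conj A1 A2)) _; apply/ler_wpM2l/Dmax.
have D0 : D <= 0.
  have csL : (c - s) * L < 1 by apply: le_lt_trans stL; apply: ler_wpM2r; lra.
  have := normr_ge0 (y1 c - y2 c); rewrite -/D; nra.
have tst : t \in `[s, t] by rewrite in_itv /= st lexx.
by have /= := le_trans (Dmax t tst) D0; rewrite normr_le0 subr_eq0 => /eqP.
Qed.

Lemma ode_solution_unique (F : V -> V) (y1 y2 : R -> V) :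
  lipschitz_on_balls F -> forward_solution F y1 -> forward_solution F y2 ->
  y1 0 = y2 0 -> forall t, 0 <= t -> y1 t = y2 t.
Proof.
move=> FL [c1 d1] [c2 d2] y0 T T0.
have cw (y : R -> V) (a b : R) : {within `[0, +oo[, continuous y} -> 0 <= a ->
    {within `[a, b], continuous y}.
  move=> yc a0; apply: continuous_subspaceW yc => r /=.
  by rewrite !in_itv /= andbT => /andP[ar _]; exact: le_trans ar.
have [B yB] : exists B, forall r, r \in `[0, T] -> `|y1 r| <= B /\ `|y2 r| <= B.
  have cn : {within `[0, T], continuous (fun r => `|y1 r| + `|y2 r|)}.
    move=> r; apply: cvgD.
    - exact: continuous_comp (cw _ 0 T c1 (lexx _) r) (@norm_continuous _ _ _).
    - exact: continuous_comp (cw _ 0 T c2 (lexx _) r) (@norm_continuous _ _ _).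
  have [m _ maxm] := EVT_max T0 cn.
  exists (`|y1 m| + `|y2 m|) => r /maxm rm; split; apply: le_trans rm.
    by rewrite lerDl.
  by rewrite lerDr.
have [L L0 FL'] := FL B.
pose h := (L + 1)^-1.
have h0 : 0 < h by rewrite invr_gt0; lra.
have hL : h * L < 1 by rewrite mulrC ltr_pdivrMr; lra.
suff agree k t : 0 <= t <= T -> t <= k%:R * h -> y1 t = y2 t.
  have [k Tk] : exists k : nat, T <= k%:R * h.
    exists (Num.truncn (T / h)).+1.
    by have := truncnS_gt (T / h); rewrite ltr_pdivrMr // => /ltW.
  by apply: (agree k); rewrite ?T0 ?lexx.
elim: k t => [|k IH] t /andP[t0 tT] tk.
  by have -> : t = 0 by move: tk; rewrite mul0r; lra.
have [tk'|skt] := leP t (k%:R * h); first by apply: IH; rewrite ?t0.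
set s := k%:R * h in skt; have s0 : 0 <= s by rewrite mulr_ge0 // ltW.
move: tk; rewrite mulrS mulrDl mul1r -/s => tsh.
apply: (ode_solutions_agree_short F _ L s t _ _ L0 FL' (ltW skt)).
- by apply: le_lt_trans hL; apply: ler_wpM2r; lra.
- exact: cw.
- exact: cw.
- by move=> r; rewrite in_itv /= => /andP[sr _]; apply: d1; exact: le_lt_trans sr.
- by move=> r; rewrite in_itv /= => /andP[sr _]; apply: d2; exact: le_lt_trans sr.
- move=> r; rewrite in_itv /= => /andP[sr rt]; apply: yB.
  by rewrite in_itv /= (le_trans s0 sr) (le_trans rt tT).
- by apply: IH; rewrite ?s0 ?lexx //= (ltW (lt_le_trans skt tT)).
Qed.

Lemma forward_solution_rescale (F : V -> V) (y : R -> V) (K c : R) :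
  0 < K -> 0 < c -> forward_solution F y ->
  forward_solution (fun w => (K * c) *: F (K^-1 *: w)) (fun s => K *: y (c * s)).
Proof.
move=> K0 c0 [yc yd]; split.
  apply: (continuous_within_nonneg_comp_scale (fun r => K *: y r)) => // r.
  exact: cvgZl_tmp (yc r).
move=> t t0.
have /is_derive_comp_scale/(is_deriveZ K)/is_derive_eq := yd _ (mulr_gt0 c0 t0).
apply.
by rewrite !scalerA mulVf ?gt_eqF // scale1r mulrC.
Qed.

Lemma homogeneous_field_rescale (F : V -> V) (alpha K : R) :
  (forall l w, 0 < l -> F (l *: w) = l `^ (alpha + 1) *: F w) -> 0 < K ->
  (fun w => (K * K `^ alpha) *: F (K^-1 *: w)) = F.
Proof.
move=> Fhom K0; apply/funext => w.
rewrite -[in RHS](scalerKV (lt0r_neq0 K0) w) (Fhom K) //.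
rewrite powRD ?powRr1 ?(ltW K0) 1?mulrC //.
by rewrite lt0r_neq0 ?implybT.
Qed.

Lemma homogeneous_solution_scale (F : V -> V) (alpha K : R) (y z : R -> V) :
  lipschitz_on_balls F -> 0 < K ->
  (forall l w, 0 < l -> F (l *: w) = l `^ (alpha + 1) *: F w) ->
  forward_solution F y -> forward_solution F z -> z 0 = K *: y 0 ->
  forall s, 0 <= s -> z s = K *: y (K `^ alpha * s).
Proof.
move=> FL K0 Fhom ys zs z0; apply: (ode_solution_unique _ _ _ FL zs) => /=.
  rewrite -{1}(homogeneous_field_rescale _ _ _ Fhom K0).
  by apply: forward_solution_rescale => //; exact: powR_gt0.
by rewrite mulr0.
Qed.

End AutonomousODE.

Lemma smooth_lipschitz_on_balls {R : realType} {N : nat} (F : 'rV[R]_N -> 'rV[R]_N) :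
  smooth F -> lipschitz_on_balls F.
Proof.
move=> Fs; have [Fc Fd] := Fs [::].
by apply: C1_lipschitz_on_balls => // v; have [] := Fs [:: v].
Qed.

Lemma tau_le_of_time_scaling {R : realType} {n : nat}
    (phi : 'rV[R]_(n + n) -> R) (xi : 'rV[R]_n -> R -> 'rV[R]_(n + n))
    (x y : 'rV[R]_n) (K c : R) :
  1 <= c -> (forall s, 0 <= s -> xi y s = K *: xi x (c * s)) ->
  (forall w, phi w = 0 -> phi (K *: w) = 0) ->
  (exists t, 0 < t /\ phi (xi x t) = 0) ->
  tau phi xi y <= tau phi xi x.
Proof.
move=> c1 xiy phiK [t0 t0z]; have c0 : 0 < c by lra.
apply: lb_le_inf; first by exists t0.
move=> t [t_gt0 tz]; apply: (@le_trans _ _ (t / c)).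
  apply: ge_inf; first by exists 0 => r [r0 _]; exact: ltW.
  split; first by rewrite divr_gt0.
  by rewrite xiy ?divr_ge0 ?ltW // mulrC divfK ?gt_eqF // phiK.
by rewrite ler_pdivrMr //; nra.
Qed.

Theorem corollary1 (R : realType) (n m : nat)
  (f : 'rV[R]_n -> 'rV[R]_m -> 'rV[R]_n) (u : 'rV[R]_n -> 'rV[R]_m)
  (xi : 'rV[R]_n -> R -> 'rV[R]_(n + n)) (phi : 'rV[R]_(n + n) -> R)
  (alpha theta : R) (Z : set 'rV[R]_n) (Xi : set 'rV[R]_(n + n))
  (tau_i tau_i1 : R) (Mi Mi1 : set 'rV[R]_n) :
  is_solution_flow (Fcl f u) xi ->
  (* (i) *)
  smooth (Fcl f u) -> 1 <= alpha ->
  (forall (l : R) (w : 'rV[R]_(n + n)), 0 < l ->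
      Fcl f u (l *: w) = (l `^ (alpha + 1)) *: Fcl f u w) ->
  (* (ii) *)
  smooth phi -> 1 <= theta ->
  (forall (l : R) (w : 'rV[R]_(n + n)), 0 < l ->
      phi (l *: w) = (l `^ (theta + 1)) * phi w) ->
  (* (iii) *)
  (forall x : 'rV[R]_n, x != 0 ->
      phi (row_mx x 0) < 0 /\ exists t : R, 0 < t /\ phi (xi x t) = 0) ->
  (* (iv) *)
  compact Z -> compact Xi -> Z \in nbhs (0 : 'rV[R]_n) ->
  Xi \in nbhs (0 : 'rV[R]_(n + n)) ->
  (forall (x : 'rV[R]_n) (t : R), Z x -> 0 <= t ->
      phi (xi x t) <= 0 -> Xi (xi x t)) ->
  (* (v) *)
  (forall z : 'rV[R]_n, f z (u z) = 0 -> z = 0) ->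
  (* the corollary *)
  0 < tau_i -> tau_i <= tau_i1 ->
  inner_approx Mi (isochron phi xi tau_i) ->
  inner_approx Mi1 (isochron phi xi tau_i1) ->
  ray_property Mi -> ray_property Mi1 ->
  encirclement Mi Mi1 ->
  forall x : 'rV[R]_n, region Mi Mi1 x -> tau_i <= tau phi xi x.
Proof.
move=> xi_sol F_smooth alpha_ge1 F_hom _ _ phi_hom phi_zero _ _ _ _ _ _ _ _
  Mi_inner _ _ _ _ x [[k [k_ge1 Mkx]] _].
have [[kap [kap_ge1]]] := Mi_inner _ Mkx; rewrite scalerA /isochron /= => <- _.
have K_ge1 : 1 <= kap * k := mulr_ege1 kap_ge1 k_ge1.
have [->|x_neq0] := eqVneq x 0; first by rewrite scaler0.
have [x0 [xc xd]] := xi_sol x; have [Kx0 [Kxc Kxd]] := xi_sol ((kap * k) *: x).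
apply: (tau_le_of_time_scaling _ _ _ _ _ ((kap * k) `^ alpha)).
- by rewrite -[leLHS](powRr0 (kap * k)); apply: ler_powR; lra.
- have /smooth_lipschitz_on_balls F_lip := F_smooth.
  apply: (homogeneous_solution_scale _ _ _ _ _ F_lip _ F_hom (conj xc xd) (conj Kxc Kxd)).
  + lra.
  + by rewrite Kx0 x0 scale_row_mx scaler0.
- by move=> w w0; rewrite phi_hom ?w0 ?mulr0 //; lra.
- exact: (phi_zero x x_neq0).2.
Qed.
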